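(* For real numbers $x\ge y\ge2$ we have $$ \Phi(x,y)\le\frac1{\log x}\int_1^x\frac{\Phi(t,y)}{t}\,dt+\frac1{\log x}\sum_{\substack{d\le x\\P(\varphi(d))\le y}}\Phi\left(\frac xd,y\right)\Lambda(d), $$ where the sum is over positive integers $d\le x$ with $P(\varphi(d))\le y$.
   Context: $\varphi$ is Euler's totient function and $\Lambda$ is the von Mangoldt function. $P(n)$ denotes the largest prime factor of an integer $n>1$, with $P(1)=1$. For real $t\ge1$ and $y\ge2$, $\Phi(t,y)$ denotes the number of positive integers $n\le t$ with $P(\varphi(n))\le y$. *)

From Stdlib Require Import Reals List.
From Coquelicot Require Import Coquelicot.
From mathcomp Require Import ssreflect ssrbool ssrnat prime.
From mathcomp Require seq.

Open Scope R_scope.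

(* P(n): largest prime factor of n > 1, with P(1) = 1 (mathcomp max_pdiv). *)
Definition Pmax (n : nat) : nat := max_pdiv n.

Definition smooth_phi (y : R) (n : nat) : bool :=
  if Rle_dec (INR (Pmax (totient n))) y then true else false.

Definition le_real (n : nat) (t : R) : bool :=
  if Rle_dec (INR n) t then true else false.

Definition upto (t : R) : list nat :=
  filter (fun n => le_real n t) (seq 1 (Z.to_nat (up t))).

Definition Phi (t y : R) : R :=
  INR (length (filter (smooth_phi y) (upto t))).

(* von Mangoldt: Lambda(d) = log p if d = p^k with p prime, k >= 1; else 0. *)
Definition vonMangoldt (d : nat) : R :=
  if ((1 < d)%N && eqn (seq.size (primes d)) 1) then ln (INR (pdiv d)) else 0.

Definition sumR (l : list R) : R := fold_right Rplus 0 l.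

(* Write [Phi x y * ln x] as the sum, over the [n <= x] with [P(phi n) <= y], of
   [(ln x - ln n) + ln n].  The first parts add up to the integral, since
   [t |-> [n <= t] / t] integrates to [ln x - ln n] over [[1, x]].  For the second,
   [ln n <= sum_(d | n) Lambda d]; after exchanging the sums, every divisor [d] of
   such an [n] is again such an integer (because [phi d] divides [phi n]), and
   [n / d] is counted by [Phi (x / d) y]. *)

From Stdlib Require Import Reals List Lia Lra.
From Coquelicot Require Import Coquelicot.
From HB Require Import structures.
From mathcomp Require Import ssreflect ssrbool ssrfun eqtype ssrnat div prime bigop.
From mathcomp Require seq.
Open Scope R_scope.

HB.instance Definition _ :=
  Monoid.isComLaw.Build R 0 Rplus
    (fun a b c => esym (Rplus_assoc a b c)) Rplus_comm Rplus_0_l.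

Lemma sumR_map (T : Type) (f : T -> R) (l : list T) :
  sumR (map f l) = \big[Rplus/0]_(a <- l) f a.
Proof. by elim: l => [|a l IH]; rewrite ?big_nil ?big_cons //= IH. Qed.

(* [seq] is only imported inside sections, so that [map] and [filter] in the final
   statement still denote the [List] functions used by the definitions. *)
Section RealSums.
Import seq.

Lemma big_Rle (I : eqType) (r : seq I) (P : pred I) (F G : I -> R) :
  (forall i, i \in r -> P i -> F i <= G i) ->
  \big[Rplus/0]_(i <- r | P i) F i <= \big[Rplus/0]_(i <- r | P i) G i.
Proof.
move=> FG; rewrite big_seq_cond [X in _ <= X]big_seq_cond.
elim/big_ind2: _ => [|*|i /andP[]]; [lra | exact: Rplus_le_compat | exact: FG].
Qed.

Lemma big_const_R (I : Type) (r : seq I) (P : pred I) (c : R) :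
  \big[Rplus/0]_(i <- r | P i) c = INR (count P r) * c.
Proof.
rewrite big_const_seq; elim: (count P r) => [|n IH]; first by rewrite /=; lra.
by rewrite S_INR /= IH; lra.
Qed.

Lemma big_Rge0 (I : Type) (r : seq I) (P : pred I) (F : I -> R) :
  (forall i, P i -> 0 <= F i) -> 0 <= \big[Rplus/0]_(i <- r | P i) F i.
Proof. by move=> F0; elim/big_ind: _ => // [|*]; [lra | exact: Rplus_le_le_0_compat]. Qed.

Lemma big_Rle_subpred (I : eqType) (r : seq I) (P Q : pred I) (F : I -> R) :
  (forall i, i \in r -> P i -> Q i) -> (forall i, i \in r -> Q i -> 0 <= F i) ->
  \big[Rplus/0]_(i <- r | P i) F i <= \big[Rplus/0]_(i <- r | Q i) F i.
Proof.
move=> PQ F0; rewrite big_mkcond [X in _ <= X]big_mkcond.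
apply: big_Rle => i ri _; case: ifP => [/(PQ i ri)-> | _]; first exact: Rle_refl.
by case: ifP => [/(F0 i ri) | _]; last exact: Rle_refl.
Qed.

Lemma is_RInt_big (I : eqType) (r : seq I) (P : pred I) (f : I -> R -> R)
    (v : I -> R) (a b : R) :
  (forall i, i \in r -> P i -> is_RInt (f i) a b (v i)) ->
  is_RInt (fun t => \big[Rplus/0]_(i <- r | P i) f i t) a b
          (\big[Rplus/0]_(i <- r | P i) v i).
Proof.
elim: r => [|i r IH] fv.
  rewrite big_nil; apply: (is_RInt_ext (fun _ => 0)) => [t _|]; first by rewrite big_nil.
  by move: (is_RInt_const a b 0); rewrite scal_zero_r.
have {}IH := IH (fun j jr => fv j (@mem_behead _ (i :: r) j jr)).
rewrite big_cons; case: ifP => Pi; last first.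
  by apply: (is_RInt_ext _ _ _ _ _ _ IH) => t _; rewrite big_cons Pi.
apply: (is_RInt_ext (fun t => f i t + \big[Rplus/0]_(j <- r | P j) f j t)).
  by move=> t _; rewrite big_cons Pi.
exact: (is_RInt_plus _ _ _ _ _ _ (fv i (mem_head i r) Pi) IH).
Qed.

End RealSums.

Section ArithmeticFunctions.
Import seq.

Lemma totient_dvdn d n : (0 < n)%N -> d %| n -> totient d %| totient n.
Proof.
move=> n0 dn; have d0 : (0 < d)%N := dvdn_gt0 n0 dn.
rewrite !totientE //.
apply: (@dvdn_trans (\prod_(p <- primes d) (p.-1 * p ^ (logn p n).-1))).
  elim/big_ind2: _ => // [*|p _]; first exact: dvdn_mul.
  apply/dvdn_mul/dvdn_exp2l => //; rewrite -!subn1 leq_sub2r //.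
  exact: dvdn_leq_log.
rewrite [X in _ %| X](bigID (mem (primes d))) /=; apply: dvdn_mulr.
rewrite -[X in _ %| X]big_filter.
suff e : perm_eq [seq p <- primes n | p \in primes d] (primes d).
  by rewrite (perm_big _ e).
apply: uniq_perm; rewrite ?filter_uniq ?primes_uniq // => p.
rewrite mem_filter andb_idr // !mem_primes n0 => /and3P[-> _ pd].
exact: dvdn_trans dn.
Qed.

Lemma max_pdiv_dvdn_leq d n : (0 < n)%N -> d %| n -> (max_pdiv d <= max_pdiv n)%N.
Proof.
move=> n0 dn; case: (ltnP 1 d) => [d1|]; last by case: d {dn} => [|[|]].
apply: max_pdiv_max; move: (pi_max_pdiv d); rewrite d1 !mem_primes n0.
by case/and3P=> -> _ /dvdn_trans->.
Qed.

Lemma smooth_phi_dvdn [y : R] [d n : nat] :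
  (0 < n)%N -> d %| n -> smooth_phi y n -> smooth_phi y d.
Proof.
move=> n0 dn; have le_dn : INR (Pmax (totient d)) <= INR (Pmax (totient n)).
  apply/le_INR/leP/max_pdiv_dvdn_leq; last exact: totient_dvdn.
  by rewrite totient_gt0.
by rewrite /smooth_phi; do 2 case: Rle_dec => //; move=> *; exfalso; lra.
Qed.

Lemma vonMangoldt_ge0 d : 0 <= vonMangoldt d.
Proof.
rewrite /vonMangoldt; case: ifP => _; last exact: Rle_refl.
rewrite -ln_1; apply: ln_le; first exact: Rlt_0_1.
exact/(le_INR 1)/leP/pdiv_gt0.
Qed.

Lemma vonMangoldt_pfactor p k :
  prime p -> (0 < k)%N -> vonMangoldt (p ^ k) = ln (INR p).
Proof.
move=> pp; case: k => // k _.
rewrite /vonMangoldt primesX // primes_prime // pdiv_pfactor //.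
by rewrite -[X in (X < _)%N](expn0 p) ltn_exp2l ?prime_gt1.
Qed.

(* Peel off [p = pdiv n]: [p ^ logn p n] divides [n] but not [n %/ p], and
   contributes [ln p]. *)
Lemma ln_le_sum_vonMangoldt N n : (0 < n)%N -> (n <= N)%N ->
  ln (INR n) <= \big[Rplus/0]_(d <- iota 1 N | d %| n) vonMangoldt d.
Proof.
elim/ltn_ind: n => n IH n0 nN; case: (ltnP 1 n) => [n1 | n_le1]; last first.
  rewrite (_ : n = 1%N); last by apply/eqP; rewrite eqn_leq n_le1.
  rewrite ln_1; apply: big_Rge0 => d _; exact: vonMangoldt_ge0.
set p := pdiv n; set k := logn p n; set m := n %/ p.
have pp : prime p by exact: pdiv_prime.
have n_mp : n = (m * p)%N by rewrite divnK ?pdiv_dvd.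
have m0 : (0 < m)%N by move: n0; rewrite n_mp muln_gt0 => /andP[].
have k_m : k = (logn p m).+1.
  by rewrite /k n_mp (lognM _ m0 (prime_gt0 pp)) (logn_prime p pp) eqxx addn1.
have pk_n : p ^ k %| n := pfactor_dvdnn p n.
have pk_m : ~~ (p ^ k %| m) by rewrite pfactor_dvdn // k_m ltnn.
have pk_I : (p ^ k)%N \in [seq d <- iota 1 N | d %| n].
  rewrite mem_filter pk_n mem_iota expn_gt0 prime_gt0 //= add1n ltnS.
  exact: leq_trans (dvdn_leq n0 pk_n) nN.
rewrite -big_filter (bigD1_seq _ pk_I) ?filter_uniq ?iota_uniq //= big_filter_cond.
have -> : ln (INR n) = vonMangoldt (p ^ k)%N + ln (INR m).
  rewrite vonMangoldt_pfactor ?k_m // n_mp mult_INR ln_mult; first lra.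
    exact/lt_0_INR/ltP.
  exact/lt_0_INR/ltP/prime_gt0.
apply: Rplus_le_compat_l; apply: Rle_trans (IH m _ m0 _) _.
- by rewrite /m ltn_Pdiv ?prime_gt1.
- by apply: leq_trans nN; rewrite /m leq_div.
apply: big_Rle_subpred => [d _ dm | d _ _]; last exact: vonMangoldt_ge0.
rewrite n_mp dvdn_mulr //=; apply: contraNneq pk_m => <-; exact: dm.
Qed.

End ArithmeticFunctions.

Lemma is_RInt_eq0 (f : R -> R) (a b : R) :
  a <= b -> (forall t, a < t < b -> f t = 0) -> is_RInt f a b 0.
Proof.
move=> ab f0; move: (is_RInt_const a b 0); rewrite scal_zero_r.
by apply: is_RInt_ext => t; rewrite Rmin_left // Rmax_right // => /f0->.
Qed.

Lemma le_realP n t : reflect (INR n <= t) (le_real n t).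
Proof. by rewrite /le_real; case: Rle_dec => h; constructor. Qed.

Lemma le_up_nat n t : INR n <= t -> (n <= Z.to_nat (up t))%N.
Proof.
move=> nt; have [t_up _] := archimed t.
have : (Z.of_nat n < up t)%Z by apply: lt_IZR; rewrite -INR_IZR_INZ; lra.
by move=> n_up; apply/leP; lia.
Qed.

Lemma is_RInt_inv_from n x : 1 <= INR n -> 1 <= x ->
  is_RInt (fun t => if le_real n t then / t else 0) 1 x
          (if le_real n x then ln x - ln (INR n) else 0).
Proof.
move=> n1 x1; case: (le_realP n x) => [nx | xn]; last first.
  by apply: is_RInt_eq0 => // t [_ tx]; case: le_realP => //; lra.
rewrite -[X in is_RInt _ _ _ X]Rplus_0_l; apply: (is_RInt_Chasles _ _ (INR n)).
  by apply: is_RInt_eq0 => // t [_ tn]; case: le_realP => //; lra.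
have FTC : is_RInt Rinv (INR n) x (minus (ln x) (ln (INR n))).
  apply: is_RInt_derive => t; rewrite Rmin_left // Rmax_right // => -[nt _].
    by apply: is_derive_ln; lra.
  by apply: continuous_Rinv; lra.
apply: is_RInt_ext FTC => t; rewrite Rmin_left // Rmax_right // => -[nt _].
by case: le_realP => //; lra.
Qed.

Section PhiCounting.
Import seq.
Variable y : R.

(* Only used on ranges [iota 1 N]: it does not exclude [n = 0]. *)
Definition Phi_pred (t : R) (n : nat) : bool := smooth_phi y n && le_real n t.

Lemma count_iota_bounded (P : pred nat) B M :
  (forall n, P n -> n <= B)%N -> (B <= M)%N ->
  count P (iota 1 M) = count P (iota 1 B).
Proof.
move=> PB BM; rewrite -(subnKC BM) iotaD count_cat.
rewrite [X in (_ + X)%N](@eq_in_count _ _ pred0) ?count_pred0 ?addn0 // => n.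
rewrite mem_iota add1n => /andP[Bn _]; apply/negbTE; apply: contraTN Bn.
by move/PB; rewrite leqNgt.
Qed.

Lemma Phi_count t N : (forall n, INR n <= t -> (n <= N)%N) ->
  Phi t y = INR (count (Phi_pred t) (iota 1 N)).
Proof.
move=> tN; set K := Z.to_nat (up t).
have -> : Phi t y = INR (count (Phi_pred t) (iota 1 K)).
  rewrite -size_filter (@eq_filter _ _ (predI (smooth_phi y) (le_real^~ t))) //.
  by rewrite filter_predI.
have PB : forall n, Phi_pred t n -> (n <= minn K N)%N.
  by move=> n /andP[_ /le_realP nt]; rewrite leq_min le_up_nat ?tN.
rewrite (@count_iota_bounded _ _ K PB) ?geq_minl //.
by rewrite (@count_iota_bounded _ _ N PB) ?geq_minr.
Qed.

Lemma Phi_pred_dvdn [t : R] [d n : nat] :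
  (0 < n)%N -> d %| n -> Phi_pred t n -> Phi_pred t d.
Proof.
move=> n0 dn /andP[sn /le_realP nt]; rewrite /Phi_pred (smooth_phi_dvdn n0 dn sn) /=.
apply/le_realP; apply: (Rle_trans _ (INR n)) => //; apply/le_INR/leP; exact: dvdn_leq.
Qed.

Lemma count_multiples_le t d N : (0 < d)%N ->
  (count (fun n => Phi_pred t n && (d %| n)) (iota 1 N)
   <= count (Phi_pred (t / INR d)) (iota 1 N))%N.
Proof.
move=> d0; rewrite -!size_filter -(size_map (divn^~ d)).
apply: uniq_leq_size => [|m /mapP[n]].
  rewrite map_inj_in_uniq ?filter_uniq ?iota_uniq // => n1 n2.
  rewrite !mem_filter => /andP[/andP[_ dn1] _] /andP[/andP[_ dn2] _] e.
  by rewrite -(divnK dn1) e divnK.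
rewrite !mem_filter mem_iota => /andP[/andP[Pn dn] /andP[n0 nN]] ->.
have nd_n : n %/ d %| n by rewrite -{2}(divnK dn) dvdn_mulr.
rewrite mem_iota divn_gt0 // (dvdn_leq n0 dn) (leq_ltn_trans (leq_div n d) nN) /=.
rewrite andbT.
move: Pn => /andP[sn /le_realP nt]; rewrite /Phi_pred (smooth_phi_dvdn n0 nd_n sn) /=.
have dpos : 0 < INR d by exact/lt_0_INR/ltP.
apply/le_realP; apply: (Rmult_le_reg_r (INR d)) => //.
by rewrite -mult_INR multE divnK // /Rdiv Rmult_assoc Rinv_l ?Rmult_1_r //; lra.
Qed.

Lemma sum_ln_le_sum_Phi x N : 0 <= x -> (forall n, INR n <= x -> (n <= N)%N) ->
  \big[Rplus/0]_(n <- iota 1 N | Phi_pred x n) ln (INR n)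
  <= \big[Rplus/0]_(d <- iota 1 N | Phi_pred x d) (Phi (x / INR d) y * vonMangoldt d).
Proof.
move=> x0 xN.
apply: (Rle_trans _ (\big[Rplus/0]_(n <- iota 1 N | Phi_pred x n)
                      \big[Rplus/0]_(d <- iota 1 N | d %| n) vonMangoldt d)).
  apply: big_Rle => n; rewrite mem_iota add1n ltnS => /andP[n0 nN] _.
  exact: ln_le_sum_vonMangoldt.
rewrite (exchange_big_dep xpredT) //= [X in _ <= X]big_mkcond /=.
apply: big_Rle => d; rewrite mem_iota => /andP[d0 _] _; rewrite big_const_R.
case: ifP => Pd; last first.
  rewrite (@eq_in_count _ _ pred0) ?count_pred0 /= => [|n]; first lra.
  rewrite mem_iota => /andP[n0 _]; apply/negbTE/negP => /andP[Pn dn].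
  by move: Pd; rewrite (Phi_pred_dvdn n0 dn Pn).
apply: Rmult_le_compat_r; first exact: vonMangoldt_ge0.
have d1 : 1 <= INR d by exact/(le_INR 1)/leP.
have x_d : x / INR d <= x.
  rewrite -[X in _ <= X]Rmult_1_r; apply: Rmult_le_compat_l => //.
  by rewrite -Rinv_1; apply: Rinv_le_contravar; lra.
rewrite (@Phi_count _ N) => [|n nx]; last exact/xN/(Rle_trans _ _ _ nx).
exact/le_INR/leP/count_multiples_le.
Qed.

Lemma RInt_Phi_div x : 1 <= x ->
  RInt (fun t => Phi t y / t) 1 x
  = \big[Rplus/0]_(n <- iota 1 (Z.to_nat (up x)) | Phi_pred x n) (ln x - ln (INR n)).
Proof.
move=> x1; set N := Z.to_nat (up x); apply: is_RInt_unique.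
rewrite big_mkcondr; apply: (is_RInt_ext (fun t =>
  \big[Rplus/0]_(n <- iota 1 N | smooth_phi y n) (if le_real n t then / t else 0))).
  move=> t; rewrite Rmin_left // Rmax_right // => -[t1 tx].
  rewrite (@Phi_count _ N) => [|n nt]; last by apply/le_up_nat; lra.
  by rewrite /Rdiv -big_const_R [RHS]big_mkcondr.
apply: is_RInt_big => n; rewrite mem_iota => /andP[n0 _] _.
by apply: is_RInt_inv_from => //; apply/(le_INR 1)/leP.
Qed.

Lemma Phi_mul_ln_le x : 1 <= x ->
  Phi x y * ln x <= RInt (fun t => Phi t y / t) 1 x
    + \big[Rplus/0]_(d <- iota 1 (Z.to_nat (up x)) | Phi_pred x d)
        (Phi (x / INR d) y * vonMangoldt d).
Proof.
move=> x1; set N := Z.to_nat (up x).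
rewrite RInt_Phi_div // (@Phi_count _ N) => [|n]; last exact: le_up_nat.
rewrite -big_const_R (eq_bigr (fun n => ln x - ln (INR n) + ln (INR n))) => [|n _]; last ring.
rewrite big_split /=; apply: Rplus_le_compat_l.
by apply: sum_ln_le_sum_Phi => [|n]; [lra | exact: le_up_nat].
Qed.

Lemma big_smooth_upto x (F : nat -> R) :
  \big[Rplus/0]_(d <- upto x | smooth_phi y d) F d
  = \big[Rplus/0]_(d <- iota 1 (Z.to_nat (up x)) | Phi_pred x d) F d.
Proof. by rewrite /upto big_filter_cond; apply: eq_bigl => d; rewrite andbC. Qed.

End PhiCounting.

Theorem lemma3p1 (x y : R) (Hy : 2 <= y) (Hxy : y <= x) :
  Phi x y <=
    / ln x * RInt (fun t => Phi t y / t) 1 x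
    + / ln x * sumR (map (fun d => Phi (x / INR d) y * vonMangoldt d)
                         (filter (smooth_phi y) (upto x))).
Proof.
have x1 : 1 <= x by lra.
have lnx : 0 < ln x by rewrite -ln_1; apply: ln_increasing; lra.
rewrite sumR_map big_filter big_smooth_upto -Rmult_plus_distr_l.
apply: (Rmult_le_reg_l (ln x)) => //.
rewrite -Rmult_assoc Rinv_r ?Rmult_1_l; last lra.
by rewrite Rmult_comm; apply: Phi_mul_ln_le.
Qed.
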